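(* Let $\mathcal{P}\subseteq[0,1]^n$ be a polytope. If $\mathcal{F}$ is a strong Bernoulli factory for $\mathcal{P}$ that converges exponentially on $\mathcal{P}$, then $\mathcal{F}$ is differentiable.
   Context: A Bernoulli factory with output set $V$ (for inputs $x\in[0,1]^n$) is a (possibly infinite) rooted binary tree whose internal nodes are labeled by an index $i\in[n]$ or a known constant $c\in(0,1)$ and whose leaves are labeled by elements of $V$; on input $x$ one walks from the root, at a node labeled $i$ flipping a fresh independent coin that is $1$ with probability $x_i$, at a node labeled $c$ a fresh coin of bias $c$, following the edge labeled by the outcome, and outputs the label of the leaf reached; $\mathcal{F}(x)$ is the output and $T_{\mathcal{F}}(x)$ the depth of the leaf reached ($\infty$ if none). For a polytope $\mathcal{P}$ with vertex set $V$, a strong Bernoulli factory for $\mathcal{P}$ is such a factory with output set $V$ that terminates almost surely and satisfies $\mathbb{E}[\mathcal{F}(x)]=x$ for all $x\in\mathcal{P}$. $\mathcal{F}$ converges exponentially on $S$ if there is $c<1$ with $\Pr[T_{\mathcal{F}}(x)>d]\le c^d$ for all positive integers $d$ and all $x\in S$. Define $P_v(x)=\Pr[\mathcal{F}(x)=v]$ and $P_{v,T}(x)=\Pr[\mathcal{F}(x)=v\wedge T_{\mathcal{F}}(x)\le T]$; the latter is the polynomial equal to the sum, over leaves labeled $v$ at depth at most $T$, of the product of the transition probabilities along the root-to-leaf path. Let $\mathcal{H}(\mathcal{P})$ be the affine span of $\mathcal{P}$ and $\mathcal{H}_0(\mathcal{P})=\{y-y':y,y'\in\mathcal{H}(\mathcal{P})\}$.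 $\mathcal{F}$ is differentiable if for each $v\in V$ and each $u\in\mathcal{H}_0(\mathcal{P})$ with $\|u\|=1$, at every $x\in\mathcal{P}$ the directional derivative $\partial_uP_v(x)$ exists and equals $\lim_{T\to\infty}\partial_uP_{v,T}(x)$. *)

From HB Require Import structures.
From mathcomp Require Import all_boot all_order all_algebra.
From mathcomp Require Import all_classical all_reals all_analysis.
Set Implicit Arguments. Unset Strict Implicit. Unset Printing Implicit Defensive.
Import Order.TTheory GRing.Theory Num.Theory.
Import numFieldNormedType.Exports.
Local Open Scope ring_scope.
Local Open Scope classical_set_scope.

Section BernoulliFactory.
Variables (R : realType) (n : nat).
Local Notation pt := 'rV[R]_n.

(* Labels of the nodes of a (possibly infinite) rooted binary tree:
   coin index i, known constant c, or a leaf labelled by a point. *)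
Inductive node := NCoin of 'I_n | NConst of R | NLeaf of pt.

(* A tree is given by the label of the node reached along each path from the
   root; a path is a sequence of coin outcomes (true = outcome 1).  Entries for
   paths going below a leaf are irrelevant (they are not nodes of the tree). *)
Definition tree := seq bool -> node.

Definition is_leaf (a : node) : bool := if a is NLeaf _ then true else false.

Definition is_node (F : tree) (p : seq bool) : bool :=
  [forall k : 'I_(size p), ~~ is_leaf (F (take k p))].

Definition step_prob (a : node) (x : pt) (b : bool) : R :=
  match a with
  | NCoin i => if b then x 0 i else 1 - x 0 i
  | NConst c => if b then c else 1 - c
  | NLeaf _ => 0
  end.

Fixpoint path_weight (F : tree) (x : pt) (pre s : seq bool) : R :=
  match s with
  | [::] => 1
  | b :: s' => step_prob (F pre) x b * path_weight F x (rcons pre b) s'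
  end.

Definition weight (F : tree) (x : pt) (p : seq bool) : R := path_weight F x [::] p.

Definition leaf_mass (F : tree) (x : pt) (Q : pt -> bool) (T : nat) : R :=
  \sum_(k < T.+1) \sum_(t : k.-tuple bool)
     (if is_node F t then
        match F t with NLeaf w => if Q w then weight F x t else 0 | _ => 0 end
      else 0).

(* P_{v,T}(x) = Pr[F(x) = v /\ T_F(x) <= T] *)
Definition PvT (F : tree) (v : pt) (T : nat) (x : pt) : R := leaf_mass F x (pred1 v) T.

(* Pr[T_F(x) <= T] *)
Definition PrTle (F : tree) (T : nat) (x : pt) : R := leaf_mass F x predT T.

(* P_v(x) = Pr[F(x) = v] = sum over all leaves labelled v (countable additivity) *)
Definition Pv (F : tree) (v : pt) (x : pt) : R := lim ((fun T => PvT F v T x) @ \oo).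

Definition factory_with_outputs (F : tree) (V : seq pt) : Prop :=
  forall p, is_node F p ->
    match F p with
    | NCoin _ => True
    | NConst c => 0 < c < 1
    | NLeaf w => w \in V
    end.

Definition unit_cube : set pt := [set x | forall i, 0 <= x 0 i <= 1].

Definition conv_hull (V : seq pt) : set pt :=
  [set x | exists w : 'I_(size V) -> R,
      (forall i, 0 <= w i) /\ \sum_i w i = 1 /\ x = \sum_i w i *: V`_i].

Definition is_vertex_set (V : seq pt) : Prop :=
  uniq V /\ forall v, v \in V -> ~ conv_hull (rem v V) v.

Definition aff_span (S : set pt) : set pt :=
  [set y | exists (m : nat) (p : 'I_m -> pt) (w : 'I_m -> R),
      (forall i, S (p i)) /\ \sum_i w i = 1 /\ y = \sum_i w i *: p i].

Definition aff_dir (S : set pt) : set pt :=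
  [set z | exists y y', aff_span S y /\ aff_span S y' /\ z = y - y'].

Definition unit_norm (u : pt) : Prop := \sum_i (u 0 i) ^+ 2 = 1.

Definition strong_factory (F : tree) (V : seq pt) : Prop :=
  factory_with_outputs F V /\
  (forall x, conv_hull V x -> (fun T => PrTle F T x) @ \oo --> (1 : R)) /\
  (forall x, conv_hull V x -> \sum_(v <- V) Pv F v x *: v = x).

Definition converges_exp (F : tree) (S : set pt) : Prop :=
  exists c : R, c < 1 /\
    forall d : nat, (0 < d)%N -> forall x, S x -> 1 - PrTle F d x <= c ^+ d.

(* differentiability: for v in V, u in H_0(P) with |u| = 1, x in P, the
   directional derivative of P_v at x along u (taken within P, since P_v is
   only meaningful there) exists and equals lim_T of the directional
   derivatives of the polynomials P_{v,T}. *)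
Definition differentiable_factory (F : tree) (V : seq pt) : Prop :=
  forall v, v \in V -> forall u, aff_dir (conv_hull V) u -> unit_norm u ->
  forall x, conv_hull V x ->
  exists L : R,
    (fun T => derive1 (fun t : R => PvT F v T (x + t *: u)) 0) @ \oo --> L /\
    (fun t : R => t^-1 * (Pv F v (x + t *: u) - Pv F v x))
      @ within (fun t : R => conv_hull V (x + t *: u)) 0^' --> L.

End BernoulliFactory.

From HB Require Import structures.
From mathcomp Require Import all_boot all_order all_algebra.
From mathcomp Require Import all_classical all_reals all_analysis.
From mathcomp Require Import ring lra.
Set Implicit Arguments. Unset Strict Implicit. Unset Printing Implicit Defensive.
Import Order.TTheory GRing.Theory Num.Theory.
Import numFieldNormedType.Exports.
Local Open Scope ring_scope.
Local Open Scope classical_set_scope.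

(* Split P_v = sum_k m_k by depth, m_k(y) being the mass of the depth-k leaves labelled v.
   Along a segment from z to q inside the polytope every edge probability is a nonnegative
   affine function of the position, so each path weight is a product of such factors, and a
   Markov-type inequality for these products bounds the derivative of m_k at z in direction
   q - z by k m_k(z) + 4(k+1) m_k(z + (q - z)/(2(k+1))), hence by (5k + 4) c^(k-1) under
   exponential convergence.  Every direction of H_0(P) is an affine combination of such
   differences, so the derivatives of the m_k along u are dominated, uniformly on P, by a
   summable sequence; termwise differentiation, through the mean value theorem on the chord of P
   through x, gives the result. *)

Section RealLemmas.
Variable R : realType.

Lemma bernoulli_ineq (h : R) k : 0 <= h <= 1 -> 1 - k%:R * h <= (1 - h) ^+ k.
Proof.
move=> /andP[h0 h1]; elim: k => [|k IH]; first by rewrite mul0r subr0 expr0.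
rewrite exprS -[k.+1]addn1 natrD.
have k0 : 0 <= k%:R :> R by rewrite ler0n.
have : (1 - h) * (1 - k%:R * h) <= (1 - h) * (1 - h) ^+ k by rewrite ler_wpM2l // subr_ge0.
have : 0 <= k%:R * (h * h) by rewrite !mulr_ge0.
nra.
Qed.

Lemma sum_succ_mul_expr_le (c : R) T : 0 <= c < 1 ->
  \sum_(j < T) (j%:R + 1) * c ^+ j <= ((1 - c) ^+ 2)^-1.
Proof.
move=> /andP[c0 c1].
have closed_form : (1 - c) ^+ 2 * \sum_(j < T) (j%:R + 1) * c ^+ j =
    1 - (T%:R + 1) * c ^+ T + T%:R * c ^+ T.+1.
  elim: T => [|T IH]; first by rewrite big_ord0 mulr0 expr0 mul0r; lra.
  by rewrite big_ord_recr /= mulrDr IH -natr1 !exprS; ring.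
rewrite -[leRHS]mulr1 ler_pdivlMl ?exprn_gt0 ?subr_gt0 //.
rewrite closed_form [c ^+ T.+1]exprS.
have : 0 <= T%:R * c ^+ T by rewrite mulr_ge0 ?ler0n ?exprn_ge0.
have : 0 <= c ^+ T by rewrite exprn_ge0.
nra.
Qed.

Lemma is_derive_sum_fin (I : finType) (f : I -> R -> R) (df : I -> R) (t : R) :
  (forall i, is_derive t (1 : R) (f i) (df i)) ->
  is_derive t 1 (fun s => \sum_i f i s) (\sum_i df i).
Proof.
move=> fd; rewrite -fct_sumE.
by elim/big_ind2: _ => // [|? ? ? ? ? ?]; [exact: is_derive_cst | exact: is_deriveD].
Qed.

Lemma is_derive_series (f : nat -> R -> R) (df : R ^nat) N (t : R) :
  (forall k, is_derive t (1 : R) (f k) (df k)) ->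
  is_derive t (1 : R) (fun s => series (f ^~ s) N) (series df N).
Proof.
move=> fd; under eq_fun do rewrite seriesEord.
by rewrite seriesEord; apply: is_derive_sum_fin.
Qed.

Lemma is_derive_diff_quotient (f : R -> R) (df : R) : is_derive (0 : R) (1 : R) f df ->
  (fun h : R => h^-1 * (f h - f 0)) @ 0^' --> df.
Proof.
move=> [fd <-].
have -> : (fun h : R => h^-1 * (f h - f 0)) = (fun h => h^-1 *: ((f \o shift 0) (h *: 1) - f 0)).
  by apply: funext => h /=; rewrite addr0 /GRing.scale /= mulr1.
exact: fd.
Qed.

Lemma mean_value_abs (f df : R -> R) (t M : R) :
  (forall s : R, is_derive s (1 : R) f (df s)) ->
  (forall s, `|s| <= `|t| -> 0 <= s * t -> `|df s| <= M) ->
  `|f t - f 0| <= `|t| * M.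
Proof.
move=> fd dfM.
have f_cont a b : {within `[a, b], continuous f}.
  by apply: derivable_within_continuous => s _; case: (fd s).
have [t0|t0] := leP 0 t.
  have [s] := MVT_segment t0 (fun s _ => fd s) (f_cont 0 t).
  rewrite in_itv /= => /andP[s0 st] ->.
  by rewrite subr0 normrM mulrC ler_wpM2l // dfM ?mulr_ge0 // !ger0_norm.
have [s] := MVT_segment (ltW t0) (fun s _ => fd s) (f_cont t 0).
rewrite in_itv /= => /andP[ts s0] E.
rewrite -normrN opprB E sub0r normrM mulrC normrN ler_wpM2l // dfM ?mulr_le0 ?(ltW t0) //.
by rewrite !ler0_norm ?lerN2 ?(ltW t0).
Qed.

End RealLemmas.

Section TermwiseDerivative.
Variables (R : realType) (g dg : nat -> R -> R) (M : R ^nat) (A : set R) (G : R -> R).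
Hypothesis g_derive : forall k (s : R), is_derive s (1 : R) (g k) (dg k s).
Hypothesis A0 : A 0.
(* [s] lies between [0] and [t]. *)
Hypothesis A_star : forall t s, A t -> `|s| <= `|t| -> 0 <= s * t -> A s.
Hypothesis dg_le : forall k s, A s -> `|dg k s| <= M k.
Hypothesis M_cvg : cvgn (series M).
Hypothesis G_series : forall t, A t -> series (g ^~ t) @ \oo --> G t.

Let M_ge0 k : 0 <= M k.
Proof. exact: le_trans (normr_ge0 _) (dg_le k A0). Qed.

Let tail N := limn (series M) - series M N.

Let tail_cvg0 : tail @ \oo --> 0.
Proof. by rewrite -(subrr (limn (series M))); apply: cvgB => //; exact: cvg_cst. Qed.

Let dominated_series_dist (a : R ^nat) (c l : R) N : 0 <= c ->
  (forall k, `|a k| <= c * M k) -> series a @ \oo --> l ->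
  `|l - series a N| <= c * tail N.
Proof.
move=> c0 aM al.
have dist_cvg : (fun T => `|series a T - series a N|) @ \oo --> `|l - series a N|.
  by apply: cvg_norm; apply: cvgB => //; exact: cvg_cst.
rewrite -(cvg_lim _ dist_cvg) //; apply: limr_le; first exact: cvgP dist_cvg.
near=> T; have NT : (N <= T)%N by near: T; exact: nbhs_infty_ge.
rewrite sub_series_geq //; apply: le_trans (ler_norm_sum _ _ _) _.
apply: le_trans (ler_sum _ (fun k _ => aM k)) _.
rewrite -mulr_sumr ler_wpM2l // -sub_series_geq // lerD2r.
by apply: nondecreasing_cvgn_le => //; exact: nondecreasing_series.
Unshelve. all: by end_near.
Qed.

Let g_increment_le k t : A t -> `|g k t - g k 0| <= `|t| * M k.
Proof. by move=> At; apply: mean_value_abs => // s st s_t; apply/dg_le/(A_star At). Qed.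

Let increment_dist t N : A t ->
  `|(G t - G 0) - (series (g ^~ t) N - series (g ^~ 0) N)| <= `|t| * tail N.
Proof.
move=> At; have : series (fun k => g k t - g k 0) @ \oo --> G t - G 0.
  have -> : series (fun k => g k t - g k 0) = series (g ^~ t) - series (g ^~ 0).
    by apply: funext => T; rewrite /series /= sumrB.
  exact: cvgB (G_series At) (G_series A0).
move/dominated_series_dist => /(_ `|t| N (normr_ge0 _) (fun k => g_increment_le k At)).
by rewrite /series /= sumrB.
Qed.

Let dg0_cvg : cvgn (series (dg ^~ 0)).
Proof.
apply: normed_cvg; apply: (series_le_cvg _ M_ge0 _ M_cvg) => k; first exact: normr_ge0.
exact: dg_le.
Qed.

Lemma series_derive_within : exists L : R,
  series (dg ^~ 0) @ \oo --> L /\ (fun t => t^-1 * (G t - G 0)) @ within A (0 : R)^' --> L.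
Proof.
exists (limn (series (dg ^~ 0))); split => //; set L := limn _.
apply/cvgrPdist_le => e e0; have e3 : 0 < e / 3 by rewrite divr_gt0.
have [N tailN] : exists N, tail N <= e / 3.
  have [N _ /(_ N (leqnn N))] := (cvgrPdist_le _ _).1 tail_cvg0 _ e3.
  by rewrite /= sub0r normrN => /(le_trans (ler_norm _)); exists N.
have LN : `|L - series (dg ^~ 0) N| <= tail N.
  by rewrite -[tail N]mul1r; apply: dominated_series_dist => // k; rewrite mul1r dg_le.
set gN := fun s => series (g ^~ s) N.
have gN_quotient : \forall s \near (0 : R)^',
    `|series (dg ^~ 0) N - s^-1 * (gN s - gN 0)| <= e / 3.
  have := is_derive_diff_quotient (is_derive_series N (g_derive ^~ 0)).
  by move=> /cvgrPdist_le; apply.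
rewrite near_withinE; near=> t => At.
have t0 : t != 0 by near: t; exact: nbhs_dnbhs_neq.
have quotient_gN : `|t^-1 * (gN t - gN 0) - t^-1 * (G t - G 0)| <= tail N.
  by rewrite distrC -mulrBr normrM normfV ler_pdivrMl ?normr_gt0 // increment_dist.
have : `|series (dg ^~ 0) N - t^-1 * (gN t - gN 0)| <= e / 3 by near: t.
have := ler_distD (series (dg ^~ 0) N) L (t^-1 * (G t - G 0)).
have := ler_distD (t^-1 * (gN t - gN 0)) (series (dg ^~ 0) N) (t^-1 * (G t - G 0)).
lra.
Unshelve. all: by end_near.
Qed.

End TermwiseDerivative.

Lemma sum_tuple_rcons (V : nmodType) k (f : seq bool -> V) :
  \sum_(t : k.+1.-tuple bool) f t =
  \sum_(t : k.-tuple bool) (f (rcons t true) + f (rcons t false)).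
Proof.
have -> : \sum_(t : k.-tuple bool) (f (rcons t true) + f (rcons t false)) =
    \sum_(p : k.-tuple bool * bool) f (rcons p.1 p.2).
  rewrite -(pair_bigA _ (fun (t : k.-tuple bool) b => f (rcons t b))) /=.
  by apply: eq_bigr => t _; rewrite big_bool /= addrC.
pose rc (p : k.-tuple bool * bool) : k.+1.-tuple bool := [tuple of rcons p.1 p.2].
pose unrc (t : k.+1.-tuple bool) : k.-tuple bool * bool :=
  ([tuple of belast (head false t) (behead t)], last (head false t) (behead t)).
rewrite (reindex rc) //; exists unrc => [[[s s_k] b] _ | [[|x s] s_k] _].
- rewrite /unrc /rc /=; congr pair; last by case: s {s_k} => [|x s] //=; rewrite last_rcons.
  by apply/val_inj => /=; case: s {s_k} => [|x s] //=; rewrite belast_rcons.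
- by [].
- by apply/val_inj; rewrite /= -lastI.
Qed.

Section Tree.
Variables (R : realType) (n : nat) (F : tree R n).
Local Notation pt := 'rV[R]_n.

Definition step_deriv (a : node R n) (u : pt) (b : bool) : R :=
  match a with NCoin i => if b then u 0 i else - u 0 i | _ => 0 end.

Fixpoint path_deriv (z u : pt) (pre s : seq bool) : R :=
  match s with
  | [::] => 0
  | b :: s' => step_deriv (F pre) u b * path_weight F z (rcons pre b) s'
               + step_prob (F pre) z b * path_deriv z u (rcons pre b) s'
  end.

Lemma step_prob_line a (z u : pt) (t : R) b :
  step_prob a (z + t *: u) b = step_prob a z b + t * step_deriv a u b.
Proof. by case: a => [i|c|w] /=; case: b; rewrite ?mxE; lra. Qed.

Lemma step_deriv_sub a (z q : pt) b :
  step_deriv a (q - z) b = step_prob a q b - step_prob a z b.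
Proof. by case: a => [i|c|w] /=; case: b; rewrite ?mxE; lra. Qed.

Lemma step_deriv_lin a (k : R) (u1 u2 : pt) b :
  step_deriv a (k *: u1 + u2) b = k * step_deriv a u1 b + step_deriv a u2 b.
Proof. by case: a => [i|c|w] /=; case: b; rewrite ?mxE; lra. Qed.

Lemma path_deriv_lin z (k : R) u1 u2 pre s :
  path_deriv z (k *: u1 + u2) pre s = k * path_deriv z u1 pre s + path_deriv z u2 pre s.
Proof.
elim: s pre => [|b s IH] pre /=; first by rewrite mulr0 addr0.
by rewrite IH step_deriv_lin; ring.
Qed.

Lemma is_derive_path_weight (z u : pt) pre s (t0 : R) :
  is_derive t0 (1 : R) (fun t => path_weight F (z + t *: u) pre s)
    (path_deriv (z + t0 *: u) u pre s).
Proof.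
elim: s pre => [|b s IH] pre /=; first exact: is_derive_cst.
have step_derive : is_derive t0 (1 : R) (fun t => step_prob (F pre) (z + t *: u) b)
    (step_deriv (F pre) u b).
  under eq_fun do rewrite step_prob_line.
  by apply: is_derive_eq; rewrite /GRing.scale /=; ring.
(* [step_derive] and [IH] are found by instance search. *)
apply: is_derive_eq.
by rewrite /GRing.scale /= addrC mulrC [X in _ + X]mulrC.
Qed.

Lemma path_weight_rcons z pre s b :
  path_weight F z pre (rcons s b) = path_weight F z pre s * step_prob (F (pre ++ s)) z b.
Proof.
elim: s pre => [|c s IH] pre /=; first by rewrite cats0 mulr1 mul1r.
by rewrite IH cat_rcons mulrA.
Qed.

Lemma weight_rcons y t b : weight F y (rcons t b) = weight F y t * step_prob (F t) y b.
Proof. by rewrite /weight path_weight_rcons. Qed.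

Lemma is_node_rcons t b : is_node F (rcons t b) = is_node F t && ~~ is_leaf (F t).
Proof.
have take_rcons j : (j <= size t)%N -> take j (rcons t b) = take j t.
  by move=> jt; rewrite -cats1 takel_cat.
apply/idP/idP => [/forallP node_tb | /andP[/forallP node_t t_inner]].
  have t_lt : (size t < size (rcons t b))%N by rewrite size_rcons.
  apply/andP; split; last by have := node_tb (Ordinal t_lt); rewrite /= take_rcons // take_size.
  apply/forallP => -[j jt] /=.
  have jtb : (j < size (rcons t b))%N by rewrite size_rcons ltnS ltnW.
  by have := node_tb (Ordinal jtb); rewrite /= take_rcons // ltnW.
apply/forallP => -[j] /=; rewrite size_rcons ltnS leq_eqVlt => /orP[/eqP -> | jt].
  by rewrite take_rcons // take_size.
by rewrite take_rcons ?(ltnW jt) //; exact: (node_t (Ordinal jt)).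
Qed.

Lemma is_node_take t j : is_node F t -> is_node F (take j t).
Proof.
move=> /forallP node_t; apply/forallP => -[k] /=; rewrite size_take_min ltn_min.
move=> /andP[kj kt]; rewrite take_takel ?(ltnW kj) //.
exact: (node_t (Ordinal kt)).
Qed.

(* [level_mass y Q k] is Pr[T_F(y) = k and Q (F(y))], [survival y k] is Pr[T_F(y) >= k]. *)
Definition leaf_in (Q : pt -> bool) (a : node R n) : bool :=
  if a is NLeaf w then Q w else false.

Definition leaf_ind (Q : pt -> bool) (p : seq bool) : R := (is_node F p && leaf_in Q (F p))%:R.

Definition level_mass (y : pt) Q k : R := \sum_(t : k.-tuple bool) leaf_ind Q t * weight F y t.

Definition level_deriv (z u : pt) Q k : R :=
  \sum_(t : k.-tuple bool) leaf_ind Q t * path_deriv z u [::] t.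

Definition survival (y : pt) k : R := \sum_(t : k.-tuple bool) (is_node F t)%:R * weight F y t.

Lemma leaf_mass_series y Q T : leaf_mass F y Q T = series (level_mass y Q) T.+1.
Proof.
rewrite seriesEord; apply: eq_bigr => k _; apply: eq_bigr => t _.
rewrite /leaf_ind; case: (is_node F t); rewrite ?mul0r //.
by case: (F t) => [i|c|w] /=; rewrite ?mul0r //; case: (Q w); rewrite ?mul0r ?mul1r.
Qed.

Lemma survival0 y : survival y 0 = 1.
Proof.
have node_nil : is_node F [::] by apply/forallP => -[].
rewrite /survival (eq_bigr (fun _ => 1)); first by rewrite sumr_const card_tuple expn0.
by move=> t _; rewrite tuple0 node_nil mul1r.
Qed.

Lemma survivalS y k : survival y k.+1 = survival y k - level_mass y predT k.
Proof.
rewrite /survival /level_mass (sum_tuple_rcons _ (fun t => (is_node F t)%:R * weight F y t)).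
rewrite -sumrB; apply: eq_bigr => t _.
rewrite !is_node_rcons !weight_rcons /leaf_ind.
case: (is_node F t) => /=; last by rewrite !mul0r subr0 addr0.
by case: (F t) => [i|c|w] /=; ring.
Qed.

Lemma PrTle_survival y T : PrTle F T y = 1 - survival y T.+1.
Proof.
rewrite /PrTle leaf_mass_series.
elim: T => [|T IH]; first by rewrite seriesEord /= big_ord1 survivalS survival0; lra.
by rewrite seriesSr IH [survival y T.+2]survivalS; lra.
Qed.

Lemma is_derive_level_mass (z u : pt) Q k (t0 : R) :
  is_derive t0 (1 : R) (fun t => level_mass (z + t *: u) Q k) (level_deriv (z + t0 *: u) u Q k).
Proof.
apply: is_derive_sum_fin => t.
by have := is_deriveZ (leaf_ind Q t) (is_derive_path_weight z u [::] t t0).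
Qed.

Lemma level_deriv_lin z (a : R) u1 u2 Q k :
  level_deriv z (a *: u1 + u2) Q k = a * level_deriv z u1 Q k + level_deriv z u2 Q k.
Proof.
rewrite /level_deriv mulr_sumr -big_split; apply: eq_bigr => t _.
by rewrite path_deriv_lin mulrDr mulrCA.
Qed.

Lemma PvT_series v T y : PvT F v T y = series (level_mass y (pred1 v)) T.+1.
Proof. exact: leaf_mass_series. Qed.

Lemma derive1_PvT v T (z u : pt) :
  derive1 (fun t => PvT F v T (z + t *: u)) 0 = series (level_deriv z u (pred1 v)) T.+1.
Proof.
rewrite derive1E; apply: derive_val; under eq_fun do rewrite PvT_series.
have := is_derive_series T.+1 (fun k => is_derive_level_mass z u (pred1 v) k 0).
by rewrite scale0r addr0.
Qed.

(* Small enough that (1 - h)^k >= 1/2 by Bernoulli's inequality: this is where the factor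
   4(k + 1) of [path_deriv_bound] comes from. *)
Definition markov_step (k : nat) : R := (2 * (k%:R + 1))^-1.

Lemma markov_step_gt0 k : 0 < markov_step k.
Proof. by rewrite invr_gt0 mulr_gt0 // ltr_wpDl ?ler0n. Qed.

Lemma markov_stepK k : markov_step k * (k%:R + 1) = 2^-1.
Proof. by rewrite /markov_step invfM -mulrA mulVf ?mulr1 // gt_eqF // ltr_wpDl ?ler0n. Qed.

Lemma markov_step_le1 k : markov_step k <= 1.
Proof.
have := markov_stepK k; have := markov_step_gt0 k.
have : 0 <= k%:R :> R by rewrite ler0n.
nra.
Qed.

Section Factory.
Variables (V : seq pt) (F_outputs : factory_with_outputs F V).

Lemma step_prob_ge0 y pre b s : unit_cube y -> is_node F (pre ++ b :: s) ->
  0 <= step_prob (F pre) y b.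
Proof.
move=> y_cube node_t.
have pre_inner : ~~ is_leaf (F pre).
  have pre_lt : (size pre < size (pre ++ b :: s))%N by rewrite size_cat addnS ltnS leq_addr.
  by move/forallP: node_t => /(_ (Ordinal pre_lt)); rewrite /= take_size_cat.
have := F_outputs (is_node_take (size pre) node_t); rewrite take_size_cat //; clear node_t.
case: (F pre) pre_inner => [i|c|w] //= _; last by move=> /andP[c0 c1]; case: b; lra.
by have /andP[yi0 yi1] := y_cube i; case: b; lra.
Qed.

Lemma path_weight_ge0 y pre s : unit_cube y -> is_node F (pre ++ s) ->
  0 <= path_weight F y pre s.
Proof.
move=> y_cube; elim: s pre => [|b s IH] pre //= node_t.
apply: mulr_ge0; first exact: step_prob_ge0 y_cube node_t.
by apply: IH; rewrite cat_rcons.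
Qed.

Lemma weight_ge0 y t : unit_cube y -> is_node F t -> 0 <= weight F y t.
Proof. by move=> y_cube node_t; exact: (path_weight_ge0 (pre := [::]) y_cube node_t). Qed.

Lemma nat_of_bool_weight_ge0 y t (b : bool) : unit_cube y -> b ==> is_node F t ->
  0 <= b%:R * weight F y t.
Proof. by move=> y_cube; case: b => /= [node_t|_]; rewrite ?mul1r ?weight_ge0 ?mul0r. Qed.

Lemma nat_of_bool_weight_le y t (b b' : bool) : unit_cube y ->
  b ==> b' -> b' ==> is_node F t -> b%:R * weight F y t <= b'%:R * weight F y t.
Proof.
move=> y_cube; case: b; case: b' => //= _ node_t.
by rewrite mul0r mul1r; exact: weight_ge0 y_cube node_t.
Qed.

Lemma survival_ge0 y k : unit_cube y -> 0 <= survival y k.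
Proof.
by move=> y_cube; apply: sumr_ge0 => t _; exact: nat_of_bool_weight_ge0 y_cube (implybb _).
Qed.

Lemma level_mass_ge0 y Q k : unit_cube y -> 0 <= level_mass y Q k.
Proof.
move=> y_cube; apply: sumr_ge0 => t _; apply: nat_of_bool_weight_ge0 y_cube _.
by apply/implyP => /andP[].
Qed.

Lemma level_mass_le_survival y Q k : unit_cube y -> level_mass y Q k <= survival y k.
Proof.
move=> y_cube; apply: ler_sum => t _.
by apply: nat_of_bool_weight_le => //; [by apply/implyP => /andP[] | exact: implybb].
Qed.

Lemma level_mass_le_predT y Q k : unit_cube y -> level_mass y Q k <= level_mass y predT k.
Proof.
move=> y_cube; apply: ler_sum => t _; apply: nat_of_bool_weight_le => //.
  by apply/implyP => /andP[-> ]; case: (F t).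
by apply/implyP => /andP[].
Qed.

Lemma survival_le1 y k : unit_cube y -> survival y k <= 1.
Proof.
move=> y_cube; elim: k => [|k IH]; first by rewrite survival0.
by rewrite survivalS; have := level_mass_ge0 predT k y_cube; lra.
Qed.

Lemma level_mass_le_expr y Q k (c : R) : unit_cube y ->
  (forall d : nat, (0 < d)%N -> 1 - PrTle F d y <= c ^+ d) ->
  level_mass y Q k <= c ^+ k.-1.
Proof.
move=> y_cube tail_le; apply: le_trans (level_mass_le_survival Q k y_cube) _.
case: k => [|[|k]] /=; rewrite ?expr0 ?survival_le1 //.
by have := tail_le k.+1 isT; rewrite PrTle_survival; lra.
Qed.

Lemma level_series_cvg y Q : unit_cube y -> cvgn (series (level_mass y Q)).
Proof.
move=> y_cube; apply: nondecreasing_is_cvgn.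
  by apply: nondecreasing_series => k _ _; exact: level_mass_ge0.
exists 1 => _ [[|T] _ <-]; first by rewrite seriesEord /= big_ord0.
apply: le_trans (_ : series (level_mass y predT) T.+1 <= 1).
  by rewrite !seriesEord /=; apply: ler_sum => k _; exact: level_mass_le_predT.
by rewrite -leaf_mass_series -/(PrTle F T y) PrTle_survival lerBlDr lerDl survival_ge0.
Qed.

Lemma Pv_series v y : unit_cube y -> series (level_mass y (pred1 v)) @ \oo --> Pv F v y.
Proof.
move=> y_cube; have cv := level_series_cvg (Q := pred1 v) y_cube.
have shifted : [sequence series (level_mass y (pred1 v)) T.+1]_T @ \oo -->
    limn (series (level_mass y (pred1 v))) by rewrite cvg_shiftS.
by rewrite /Pv (funext (PvT_series v ^~ y)) (cvg_lim _ shifted).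
Qed.

Section Segment.
Variables (z q : pt) (z_cube : unit_cube z) (q_cube : unit_cube q).

Lemma path_weight_segment_ge h pre s : 0 <= h <= 1 -> is_node F (pre ++ s) ->
  (1 - h) ^+ size s * path_weight F z pre s <= path_weight F (z + h *: (q - z)) pre s.
Proof.
move=> /andP[h0 h1]; elim: s pre => [|b s IH] pre node_t /=; first by rewrite mul1r.
have node_t' : is_node F (rcons pre b ++ s) by rewrite cat_rcons.
have a0 := step_prob_ge0 z_cube node_t; have e0 := step_prob_ge0 q_cube node_t.
have W0 := path_weight_ge0 z_cube node_t'.
have := IH _ node_t'; rewrite step_prob_line step_deriv_sub exprS.
set a := step_prob _ z b in a0 *; set e := step_prob _ q b in e0 *.
set X := (1 - h) ^+ _; set W := path_weight F z _ _ in W0 *; move=> IHW.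
have XW0 : 0 <= X * W by rewrite mulr_ge0 ?exprn_ge0 ?subr_ge0.
have step_le : (1 - h) * a <= a + h * (e - a) by nra.
have h1' : 0 <= 1 - h by rewrite subr_ge0.
have := ler_pM (mulr_ge0 h1' a0) XW0 step_le IHW.
by rewrite mulrACA.
Qed.

Lemma path_deriv_segment h pre s : 0 <= h <= 1 -> is_node F (pre ++ s) ->
  let W := path_weight F z pre s in let D := path_deriv z (q - z) pre s in
  - (size s)%:R * W <= D /\
  h * (1 - h) ^+ size s * (D + (size s)%:R * W) <= path_weight F (z + h *: (q - z)) pre s.
Proof.
move=> h01; have /andP[h0 h1] := h01.
elim: s pre => [|b s IH] pre node_t /=; first by rewrite !(mul0r, addr0, oppr0, mulr0).
have node_t' : is_node F (rcons pre b ++ s) by rewrite cat_rcons.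
have a0 := step_prob_ge0 z_cube node_t; have e0 := step_prob_ge0 q_cube node_t.
have W0 := path_weight_ge0 z_cube node_t'.
have XWh := path_weight_segment_ge h01 node_t'.
have [D_ge D_le] := IH _ node_t'.
rewrite step_prob_line step_deriv_sub exprS -natr1.
move: XWh D_ge D_le.
set a := step_prob _ z b in a0 *; set e := step_prob _ q b in e0 *.
set X := (1 - h) ^+ _; set W := path_weight F z _ _ in W0 *.
set Wh := path_weight F _ _ s; set D := path_deriv _ _ _ s; set d := (size s)%:R.
move=> XWh D_ge D_le.
have d0 : 0 <= d by rewrite ler0n.
have X0 : 0 <= X by rewrite exprn_ge0 ?subr_ge0.
have Wh0 : 0 <= Wh by apply: le_trans XWh; rewrite mulr_ge0.
split.
  have : a * (- d * W) <= a * D by rewrite ler_wpM2l.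
  have : 0 <= e * W by rewrite mulr_ge0.
  nra.
have D_le' : (1 - h) * a * (h * X * (D + d * W)) <= (1 - h) * a * Wh.
  by rewrite ler_wpM2l // mulr_ge0 ?subr_ge0.
have XWh' : h * e * (X * W) <= h * e * Wh by rewrite ler_wpM2l ?mulr_ge0.
have : h * (1 - h) * (e * (X * W)) <= h * (e * (X * W)).
  have : 0 <= e * (X * W) by rewrite !mulr_ge0.
  nra.
nra.
Qed.

Lemma path_deriv_bound t : is_node F t ->
  `|path_deriv z (q - z) [::] t| <=
    (size t)%:R * weight F z t
    + 4 * ((size t)%:R + 1) * weight F (z + markov_step (size t) *: (q - z)) t.
Proof.
move=> node_t; set k := size t.
have h0 := markov_step_gt0 k; have hk := markov_stepK k; have h1 := markov_step_le1 k.
set h := markov_step k in h0 hk h1 *.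
have h01 : 0 <= h <= 1 by rewrite ltW.
have {}node_t : is_node F ([::] ++ t) by [].
have W0 : 0 <= weight F z t by exact: path_weight_ge0 z_cube node_t.
have XWh := path_weight_segment_ge h01 node_t.
have [D_ge D_le] := path_deriv_segment h01 node_t.
move: XWh D_ge D_le; rewrite -!/(weight _ _ _) -/k.
set W := weight F z t; set Wh := weight F _ t; set D := path_deriv _ _ _ t.
move=> XWh D_ge D_le.
have k0 : 0 <= k%:R :> R by rewrite ler0n.
have half_le : 2^-1 <= (1 - h) ^+ k.
  by apply: le_trans (bernoulli_ineq k h01); rewrite -hk; lra.
have Wh0 : 0 <= Wh by apply: le_trans XWh; rewrite mulr_ge0 ?exprn_ge0 ?subr_ge0.
have Y_le : h * 2^-1 * (D + k%:R * W) <= Wh.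
  apply: le_trans D_le; rewrite -!mulrA ler_wpM2l ?(ltW h0) // ler_wpM2r //; lra.
have Y_le' : D + k%:R * W <= 4 * (k%:R + 1) * Wh.
  have <- : 4 * (k%:R + 1) * (h * 2^-1 * (D + k%:R * W)) = D + k%:R * W.
    have -> : 4 * (k%:R + 1) * (h * 2^-1 * (D + k%:R * W)) =
      4 * 2^-1 * (h * (k%:R + 1)) * (D + k%:R * W) by ring.
    by rewrite hk; field.
  by rewrite ler_wpM2l // mulr_ge0 // addr_ge0.
rewrite ler_norml; apply/andP; split; first nra.
have : 0 <= k%:R * W by rewrite mulr_ge0.
lra.
Qed.

Lemma level_deriv_bound Q k :
  `|level_deriv z (q - z) Q k| <=
    k%:R * level_mass z Q k + 4 * (k%:R + 1) * level_mass (z + markov_step k *: (q - z)) Q k.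
Proof.
rewrite /level_deriv /level_mass !mulr_sumr -big_split /=.
apply: le_trans (ler_norm_sum _ _ _) _; apply: ler_sum => t _; rewrite /leaf_ind.
case: (boolP (is_node F t && _)) => [/andP[node_t _] | _] /=; last first.
  by rewrite !mul0r !mulr0 normr0 addr0.
by rewrite !mul1r; apply: le_trans (path_deriv_bound node_t) _; rewrite size_tuple.
Qed.

End Segment.
End Factory.
End Tree.

Section Polytope.
Variables (R : realType) (n : nat).
Local Notation pt := 'rV[R]_n.

Lemma conv_hull_segment (V : seq pt) z q h : conv_hull V z -> conv_hull V q -> 0 <= h <= 1 ->
  conv_hull V (z + h *: (q - z)).
Proof.
move=> [wz [wz0 [wz1 ->]]] [wq [wq0 [wq1 ->]]] /andP[h0 h1].
exists (fun i => (1 - h) * wz i + h * wq i); split; [|split].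
- by move=> i; rewrite addr_ge0 // mulr_ge0 // subr_ge0.
- by rewrite big_split /= -!mulr_sumr wz1 wq1; ring.
- under [RHS]eq_bigr do rewrite scalerDl -!scalerA.
  rewrite big_split /= -!scaler_sumr scalerBr scalerBl scale1r.
  by rewrite addrCA addrC.
Qed.

Lemma conv_hull_line_star (V : seq pt) x u (t s : R) : conv_hull V x ->
  conv_hull V (x + t *: u) -> `|s| <= `|t| -> 0 <= s * t -> conv_hull V (x + s *: u).
Proof.
move=> Px Pt st s_t; have [t0|t0] := eqVneq t 0.
  by move: st; rewrite t0 normr0 normr_le0 => /eqP->; rewrite scale0r addr0.
have h0 : 0 <= s / t.
  have -> : s / t = (s * t) / (t * t) by rewrite invfM mulrA mulfK.
  by rewrite divr_ge0 // -expr2 sqr_ge0.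
have h1 : s / t <= 1.
  by apply: le_trans (ler_norm _) _; rewrite normrM normfV ler_pdivrMr ?normr_gt0 // mul1r.
have := conv_hull_segment Px Pt (introT andP (conj h0 h1)).
by rewrite addrAC subrr add0r scalerA divfK.
Qed.

Lemma aff_dir_linear_bound (S : set pt) u : aff_dir S u ->
  exists B : R, forall (f : pt -> R) (z : pt) (b : R),
    (forall a u1 u2, f (a *: u1 + u2) = a * f u1 + f u2) ->
    (forall q, S q -> `|f (q - z)| <= b) -> `|f u| <= B * b.
Proof.
move=> [y [y' [[m [p [w [Sp [w1 ->]]]]] [[m' [p' [w' [Sp' [w1' ->]]]]] ->]]]].
exists (\sum_i `|w i| + \sum_i `|w' i|) => f z b f_lin fb.
have fD u1 u2 : f (u1 + u2) = f u1 + f u2 by have := f_lin 1 u1 u2; rewrite scale1r mul1r.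
have f0 : f 0 = 0 by have := fD 0 0; rewrite addr0; lra.
have fZ a u1 : f (a *: u1) = a * f u1 by rewrite -[a *: u1]addr0 f_lin f0 addr0.
have f_comb m1 (a : 'I_m1 -> R) (r : 'I_m1 -> pt) :
    (forall i, S (r i)) -> \sum_i a i = 1 ->
    `|f (\sum_i a i *: r i - z)| <= (\sum_i `|a i|) * b.
  move=> Sr a1; rewrite -[z]scale1r -a1 scaler_suml -sumrB.
  rewrite (big_morph f fD f0) mulr_suml; apply: le_trans (ler_norm_sum _ _ _) _.
  by apply: ler_sum => i _; rewrite -scalerBr fZ normrM ler_wpM2l ?fb.
have -> : \sum_i w i *: p i - \sum_i w' i *: p' i =
    (-1) *: (\sum_i w' i *: p' i - z) + (\sum_i w i *: p i - z).
  by rewrite scaleN1r opprB [RHS]addrC subrKA.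
rewrite f_lin mulN1r addrC mulrDl.
by apply: le_trans (ler_normB _ _) _; apply: lerD; apply: f_comb.
Qed.

End Polytope.

Definition deriv_majorant (R : realType) (c : R) (k : nat) : R := (5 * k%:R + 4) * c ^+ k.-1.

Lemma deriv_majorant_series_cvg (R : realType) (c : R) : 0 <= c < 1 ->
  cvgn (series (deriv_majorant c)).
Proof.
move=> c01; have /andP[c0 _] := c01.
have b_ge0 k : 0 <= deriv_majorant c k.
  by rewrite mulr_ge0 ?exprn_ge0 // addr_ge0 // mulr_ge0 // ler0n.
apply: nondecreasing_is_cvgn; first by apply: nondecreasing_series => k _ _.
exists (4 + 9 * ((1 - c) ^+ 2)^-1) => _ [[|T] _ <-].
  by rewrite seriesEord /= big_ord0 addr_ge0 // mulr_ge0 // invr_ge0 sqr_ge0.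
rewrite seriesEord /= big_ord_recl /= /deriv_majorant mulr0 add0r expr0 mulr1 lerD2l.
apply: le_trans (_ : \sum_(j < T) 9 * ((j%:R + 1) * c ^+ j) <= _).
  apply: ler_sum => j _; rewrite /bump /= add1n /= -natr1.
  have : 0 <= c ^+ j by rewrite exprn_ge0.
  have : 0 <= j%:R :> R by rewrite ler0n.
  nra.
by rewrite -mulr_sumr ler_wpM2l // sum_succ_mul_expr_le.
Qed.

Section ExponentialConvergence.
Variables (R : realType) (n : nat) (V : seq 'rV[R]_n) (F : tree R n) (c : R).
Hypothesis F_outputs : factory_with_outputs F V.
Hypothesis P_cube : conv_hull V `<=` @unit_cube R n.
Hypothesis tail_le : forall d : nat, (0 < d)%N ->
  forall x, conv_hull V x -> 1 - PrTle F d x <= c ^+ d.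

Lemma exp_rate_ge0 x : conv_hull V x -> 0 <= c.
Proof.
move=> Px; have := @tail_le 1 isT x Px; rewrite expr1 PrTle_survival subKr.
by move/(le_trans (survival_ge0 F_outputs 2 (P_cube Px))).
Qed.

Lemma level_deriv_segment_le z q Q k : conv_hull V z -> conv_hull V q ->
  `|level_deriv F z (q - z) Q k| <= deriv_majorant c k.
Proof.
move=> Pz Pq; apply: le_trans (level_deriv_bound F_outputs (P_cube Pz) (P_cube Pq) Q k) _.
have Ph : conv_hull V (z + markov_step R k *: (q - z)).
  by apply: conv_hull_segment; rewrite // ltW ?markov_step_gt0 ?markov_step_le1.
have mz := level_mass_le_expr F_outputs Q k (P_cube Pz) (fun d d0 => tail_le d0 Pz).
have mh := level_mass_le_expr F_outputs Q k (P_cube Ph) (fun d d0 => tail_le d0 Ph).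
have k0 : 0 <= k%:R :> R by rewrite ler0n.
have k4 : 0 <= 4 * (k%:R + 1) :> R by rewrite mulr_ge0 // addr_ge0.
have := ler_wpM2l k0 mz; have := ler_wpM2l k4 mh.
rewrite /deriv_majorant; nra.
Qed.

Lemma level_deriv_aff_dir_le u Q : aff_dir (conv_hull V) u ->
  exists B : R, forall z k, conv_hull V z ->
    `|level_deriv F z u Q k| <= B * deriv_majorant c k.
Proof.
move=> Pu; have [B B_le] := aff_dir_linear_bound Pu; exists B => z k Pz.
apply: (B_le (fun w => level_deriv F z w Q k) z) => [a u1 u2 | q Pq].
  exact: level_deriv_lin.
exact: level_deriv_segment_le.
Qed.

End ExponentialConvergence.

Theorem theorem7p10 (R : realType) (n : nat) (V : seq 'rV[R]_n) (F : tree R n) :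
  is_vertex_set V -> conv_hull V `<=` @unit_cube R n ->
  strong_factory F V -> converges_exp F (conv_hull V) ->
  differentiable_factory F V.
Proof.
move=> _ P_cube [F_outputs _] [c [c1 tail_le]] v _ u Pu _ x Px.
have c0 := exp_rate_ge0 F_outputs P_cube tail_le Px.
have [B B_le] := level_deriv_aff_dir_le F_outputs P_cube tail_le (pred1 v) Pu.
have Px0 : conv_hull V (x + 0 *: u) by rewrite scale0r addr0.
have [L [dL qL]] := series_derive_within
  (g := fun k t => level_mass F (x + t *: u) (pred1 v) k)
  (dg := fun k t => level_deriv F (x + t *: u) u (pred1 v) k)
  (M := fun k => B * deriv_majorant c k) (A := fun t => conv_hull V (x + t *: u))
  (G := fun t => Pv F v (x + t *: u))
  (fun k t => is_derive_level_mass F x u (pred1 v) k t) Px0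
  (fun t s Pt => conv_hull_line_star Px Pt) (fun k s Ps => B_le _ k Ps)
  (is_cvg_seriesZ (k := B) (deriv_majorant_series_cvg (introT andP (conj c0 c1))))
  (fun t Pt => Pv_series F_outputs (P_cube _ Pt)).
exists L; split; last by rewrite scale0r addr0 in qL.
rewrite scale0r addr0 -cvg_shiftS in dL.
by under eq_fun do rewrite derive1_PvT.
Qed.
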